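(* Let $L$ be the signed Laplacian of a signed digraph and let $L_s=(L+L^\top)/2$. If $L_s$ is positive semidefinite of corank $1$, then $L$ is weight balanced (i.e. $L^\top\mathbf{1}=0$) and $-L$ is marginally stable of corank $1$.
   Context: A signed digraph has real weighted adjacency matrix $A\in\mathbb{R}^{n\times n}$ (entries of any sign). Its signed Laplacian is $L=\Sigma-A$ with $\Sigma=\mathrm{diag}(\sigma_1,\dots,\sigma_n)$, $\sigma_i=\sum_jA_{ij}$, so $L\mathbf{1}=0$. Weight balanced means $A\mathbf{1}=A^\top\mathbf{1}$, equivalently $L^\top\mathbf{1}=0$. $M$ is marginally stable if all eigenvalues have real part $\le 0$ and each eigenvalue with zero real part is a simple root of the minimal polynomial. Corank means dimension of the kernel. *)

From HB Require Import structures.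
From mathcomp Require Import all_boot all_order all_algebra.
From mathcomp Require Import complex.
From mathcomp Require Import reals.
Set Implicit Arguments. Unset Strict Implicit. Unset Printing Implicit Defensive.
Import Order.TTheory GRing.Theory Num.Theory.
Local Open Scope ring_scope.

Definition signed_laplacian (R : pzRingType) (n : nat) (A : 'M[R]_n) : 'M[R]_n :=
  diag_mx (\row_i \sum_j A i j) - A.

Definition psd (R : numDomainType) (n : nat) (M : 'M[R]_n) : Prop :=
  forall x : 'cV[R]_n, 0 <= (x^T *m M *m x) 0 0.

(* Corank = dimension of the (right) kernel {x | M x = 0}
   = row kernel of M^T. *)
Definition corank (F : fieldType) (n : nat) (M : 'M[F]_n) : nat :=
  \rank (kermx M^T).

Definition weight_balanced (R : pzRingType) (n : nat) (L : 'M[R]_n) : Prop :=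
  L^T *m (const_mx 1 : 'cV[R]_n) = 0.

Definition complexify (R : rcfType) (n : nat) (M : 'M[R]_n) : 'M[R[i]]_n :=
  map_mx (fun x => (x%:C)%C) M.

Definition marginally_stable (R : rcfType) (n : nat) (M : 'M[R]_n.+1) : Prop :=
  forall lam : R[i], eigenvalue (complexify M) lam ->
    Re lam <= 0 /\
    (Re lam = 0 -> mup lam (mxminpoly (complexify M)) = 1%N).

From HB Require Import structures.
From mathcomp Require Import all_boot all_order all_algebra.
From mathcomp Require Import complex.
From mathcomp Require Import reals.
From mathcomp Require Import ring lra.
Set Implicit Arguments. Unset Strict Implicit. Unset Printing Implicit Defensive.
Import Order.TTheory GRing.Theory Num.Theory.
Local Open Scope ring_scope.

(* Write q(x) = x L x^T; it coincides with the quadratic form of the symmetric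
   part Ls, so q >= 0.  The rows of L sum to zero, so q(1) = 0, and a zero of a
   nonnegative form lies in the kernel of its symmetric part; this kernel being
   spanned by 1, the columns of L sum to zero too, and every zero of q lies in
   the left kernel of L.  For an eigenvector v of -L with eigenvalue lam,
   q(Re v) + q(Im v) = - Re lam (|Re v|^2 + |Im v|^2), so Re lam <= 0, and
   Re lam = 0 makes q vanish at Re v and Im v, which forces lam = 0.  Finally
   q >= 0 also gives ker L^2 = ker L, so 0 is a simple root of the minimal
   polynomial. *)

Section QuadraticForm.
Variable R : realFieldType.
Implicit Types (n : nat) (a b d : R).

Definition qform n (M : 'M[R]_n) (x : 'rV[R]_n) : R := (x *m M *m x^T) 0 0.
Definition dotmx n (u v : 'rV[R]_n) : R := (u *m v^T) 0 0.

Lemma dotmxC n (u v : 'rV[R]_n) : dotmx u v = dotmx v u.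
Proof. by rewrite /dotmx -[u *m v^T]trmxK trmx_mul trmxK mxE. Qed.

Lemma dotmxDl n (u v w : 'rV[R]_n) : dotmx (u + v) w = dotmx u w + dotmx v w.
Proof. by rewrite /dotmx mulmxDl mxE. Qed.

Lemma dotmxZl n a (u w : 'rV[R]_n) : dotmx (a *: u) w = a * dotmx u w.
Proof. by rewrite /dotmx -scalemxAl mxE. Qed.

Lemma dotmxBl n (u v w : 'rV[R]_n) : dotmx (u - v) w = dotmx u w - dotmx v w.
Proof. by rewrite -scaleN1r dotmxDl dotmxZl mulN1r. Qed.

Lemma dotmx_ge0 n (u : 'rV[R]_n) : 0 <= dotmx u u.
Proof. by rewrite /dotmx mxE; apply: sumr_ge0 => j _; rewrite mxE -expr2 sqr_ge0. Qed.

Lemma dotmx_eq0 n (u : 'rV[R]_n) : dotmx u u = 0 -> u = 0.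
Proof.
rewrite /dotmx mxE => /eqP; rewrite psumr_eq0 => [/allP u0|j _]; last first.
  by rewrite mxE -expr2 sqr_ge0.
apply/matrixP => i j; rewrite (ord1 i) !mxE.
by have := u0 j (mem_index_enum j); rewrite mxE -expr2 sqrf_eq0 => /eqP.
Qed.

Lemma bilinear_tr m n (x : 'rV[R]_m) (N : 'M[R]_(m, n)) (y : 'rV[R]_n) :
  (x *m N *m y^T) 0 0 = (y *m N^T *m x^T) 0 0.
Proof.
transitivity ((y *m N^T *m x^T)^T 0 0); last by rewrite mxE.
by rewrite !trmx_mul !trmxK mulmxA.
Qed.

Lemma qform_tr n (M : 'M[R]_n) x : qform M^T x = qform M x.
Proof. by rewrite /qform bilinear_tr trmxK. Qed.

Lemma qformZ n a (M : 'M[R]_n) x : qform (a *: M) x = a * qform M x.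
Proof. by rewrite /qform -scalemxAr -scalemxAl mxE. Qed.

Lemma qformD n (M N : 'M[R]_n) x : qform (M + N) x = qform M x + qform N x.
Proof. by rewrite /qform mulmxDr mulmxDl mxE. Qed.

Lemma qformZr n a (M : 'M[R]_n) x : qform M (a *: x) = a ^+ 2 * qform M x.
Proof. by rewrite /qform [(a *: x)^T]linearZ /= -!scalemxAl -scalemxAr scalerA mxE expr2. Qed.

Lemma qformDr n (M : 'M[R]_n) x y :
  qform M (x + y) = qform M x + dotmx (x *m (M + M^T)) y + qform M y.
Proof.
have addE (B C : 'M[R]_1) : (B + C) 0 0 = B 0 0 + C 0 0 by rewrite mxE.
rewrite /qform /dotmx [(x + y)^T]linearD /= !mulmxDr !mulmxDl !addE.
by rewrite [(y *m M *m x^T) 0 0]bilinear_tr; ring.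
Qed.

Lemma affine_ge0_slope0 a b : (forall t, 0 <= a + t * b) -> b = 0.
Proof.
move=> ge0; apply/eqP; apply: contraT => b0.
by have := ge0 (- (a + 1) / b); rewrite divfK // opprD addrA subrr add0r oppr_ge0 ler10.
Qed.

Lemma quadratic_ge0_slope0 b d : (forall t, 0 <= t * b + t ^+ 2 * d) -> b = 0.
Proof.
move=> ge0; have d_ge0 : 0 <= d by have := ge0 1; have := ge0 (-1); rewrite !expr2; lra.
have d1_gt0 : 0 < d + 1 by lra.
have := ge0 (- b / (d + 1)).
have -> : - b / (d + 1) * b + (- b / (d + 1)) ^+ 2 * d = - b ^+ 2 / (d + 1) ^+ 2.
  by field; rewrite gt_eqF.
rewrite pmulr_lge0 ?invr_gt0 ?exprn_gt0 // oppr_ge0 => b2_le0.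
by apply/eqP; rewrite -sqrf_eq0 eq_le b2_le0 sqr_ge0.
Qed.

Section NonnegativeForm.
Variables (n : nat) (M : 'M[R]_n).
Hypothesis qM_ge0 : forall y, 0 <= qform M y.

(* [x] minimises the form, so its gradient [x *m (M + M^T)] vanishes. *)
Lemma qform_eq0_mul_sym x : qform M x = 0 -> x *m (M + M^T) = 0.
Proof.
move=> qx0; set y := x *m (M + M^T); apply: dotmx_eq0.
apply: (@quadratic_ge0_slope0 _ (qform M y)) => t.
by have := qM_ge0 (x + t *: y); rewrite qformDr qformZr qx0 /dotmx [(t *: y)^T]linearZ /=
  -scalemxAr mxE add0r.
Qed.

(* Along [x + t *: (x *m M)] the form is affine in [t], with slope [|x *m M|^2]. *)
Lemma qform_ge0_mul_sq_eq0 (x : 'rV[R]_n) : x *m M *m M = 0 -> x *m M = 0.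
Proof.
move=> xMM0; set z := x *m M; apply: dotmx_eq0.
have qz0 : qform M z = 0 by rewrite /qform xMM0 mul0mx mxE.
have zMx : (x *m M^T *m z^T) 0 0 = 0.
  by rewrite bilinear_tr trmxK xMM0 mul0mx mxE.
apply: (@affine_ge0_slope0 (qform M x)) => t.
have := qM_ge0 (x + t *: z); rewrite qformDr qformZr qz0 mulr0 addr0.
by rewrite /dotmx [(t *: z)^T]linearZ /= -scalemxAr mxE mulmxDr mulmxDl mxE zMx addr0 mulrC.
Qed.

End NonnegativeForm.
End QuadraticForm.

Lemma signed_laplacian_mul_const (R : pzRingType) n (A : 'M[R]_n) :
  signed_laplacian A *m (const_mx 1 : 'cV[R]_n) = 0.
Proof.
apply/matrixP => i j; rewrite /signed_laplacian mulmxBl mul_diag_mx !mxE mulr1.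
by under [X in _ - X]eq_bigr do rewrite mxE mulr1; rewrite subrr.
Qed.

Lemma rank_kermx_eq1P (F : fieldType) m n (M : 'M[F]_(m, n)) (v : 'rV[F]_m) :
  v != 0 -> v *m M = 0 ->
  \rank (kermx M) = 1%N <-> (forall x : 'rV_m, x *m M = 0 -> (x <= v)%MS).
Proof.
move=> v_neq0 vM0; have vK : (v <= kermx M)%MS by apply/sub_kermxP.
have rk_v : \rank v = 1%N by rewrite rank_rV v_neq0.
split=> [rk1 x /sub_kermxP xK | kerv].
  have /eqP : \rank v = \rank (kermx M) by rewrite rk1.
  by rewrite (mxrank_leqif_eq vK) => /eqmxP ->.
apply/eqP; rewrite eqn_leq -{1 2}rk_v !mxrankS //.
by apply/row_subP => i; apply: kerv; rewrite -row_mul mulmx_ker row0.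
Qed.

Lemma mup0_mxminpoly (F : fieldType) n (M : 'M[F]_n.+1) :
  eigenvalue M 0 -> (forall u : 'rV_n.+1, u *m M *m M = 0 -> u *m M = 0) ->
  mup 0 (mxminpoly M) = 1%N.
Proof.
move=> eig0 kerM2; have pM_neq0 : mxminpoly M != 0 by rewrite monic_neq0 ?mxminpoly_monic.
apply/eqP; rewrite eqn_leq mup_leq // mup_geq // expr1 dvdp_XsubCl.
rewrite -eigenvalue_root_min eig0 andbT polyC0 subr0.
apply/negP => /dvdpP [q pM_eq].
have q_neq0 : q != 0 by apply: contraNneq pM_neq0 => q0; rewrite pM_eq q0 mul0r.
have qM_root : horner_mx M (q * 'X) = 0.
  have := mx_root_minpoly M.
  rewrite pM_eq rmorphM rmorphXn /= horner_mx_X expr2 -!mulmxE mulmxA => qMM0.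
  rewrite rmorphM /= horner_mx_X -mulmxE; apply/row_matrixP => i.
  by rewrite row0 row_mul kerM2 // -!row_mul qMM0 row0.
have := dvdp_leq (mulf_neq0 q_neq0 (negbT (polyX_eq0 _))) (mxminpoly_min qM_root).
by rewrite pM_eq expr2 mulrA size_mulX ?mulf_neq0 ?polyX_eq0 // ltnn.
Qed.

Section Complexification.
Variable R : rcfType.
Implicit Types (m n : nat).

Local Notation Re_mx := (map_mx (@complex.Re R)).
Local Notation Im_mx := (map_mx (@complex.Im R)).

Lemma Re_mx_mul_complexify m n (w : 'M[R[i]]_(m, n)) (M : 'M[R]_n) :
  Re_mx (w *m complexify M) = Re_mx w *m M.
Proof.
apply/matrixP => i j; rewrite !mxE (big_morph _ (fun _ _ => raddfD _ _ _) (raddf0 _)).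
by apply: eq_bigr => k _; rewrite !mxE; case: (w i k) => a b /=; ring.
Qed.

Lemma Im_mx_mul_complexify m n (w : 'M[R[i]]_(m, n)) (M : 'M[R]_n) :
  Im_mx (w *m complexify M) = Im_mx w *m M.
Proof.
apply/matrixP => i j; rewrite !mxE (big_morph _ (fun _ _ => raddfD _ _ _) (raddf0 _)).
by apply: eq_bigr => k _; rewrite !mxE; case: (w i k) => a b /=; ring.
Qed.

Lemma Re_mx_scale m n (l : R[i]) (w : 'M[R[i]]_(m, n)) :
  Re_mx (l *: w) = complex.Re l *: Re_mx w - complex.Im l *: Im_mx w.
Proof. by apply/matrixP => i j; rewrite !mxE; case: l => a b; case: (w i j) => c d /=; ring. Qed.

Lemma Im_mx_scale m n (l : R[i]) (w : 'M[R[i]]_(m, n)) :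
  Im_mx (l *: w) = complex.Re l *: Im_mx w + complex.Im l *: Re_mx w.
Proof. by apply/matrixP => i j; rewrite !mxE; case: l => a b; case: (w i j) => c d /=; ring. Qed.

Lemma Re_Im_mx_eq0 m n (w : 'M[R[i]]_(m, n)) : Re_mx w = 0 -> Im_mx w = 0 -> w = 0.
Proof.
move=> /matrixP Rew0 /matrixP Imw0; apply/matrixP => i j.
by have := Rew0 i j; have := Imw0 i j; rewrite !mxE; case: (w i j) => a b /= -> ->.
Qed.

Lemma complexify_mul_sq_eq0 n (M : 'M[R]_n) :
  (forall x : 'rV[R]_n, x *m M *m M = 0 -> x *m M = 0) ->
  forall u : 'rV[R[i]]_n, u *m complexify M *m complexify M = 0 -> u *m complexify M = 0.
Proof.
move=> kerM2 u uMM0; apply: Re_Im_mx_eq0.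
  rewrite Re_mx_mul_complexify kerM2 // -!Re_mx_mul_complexify uMM0.
  by apply/matrixP => i j; rewrite !mxE.
rewrite Im_mx_mul_complexify kerM2 // -!Im_mx_mul_complexify uMM0.
by apply/matrixP => i j; rewrite !mxE.
Qed.

Lemma eigenvector_qform n (M : 'M[R]_n) (lam : R[i]) (v : 'rV[R[i]]_n) :
  v *m complexify M = lam *: v ->
  qform M (Re_mx v) + qform M (Im_mx v) =
  complex.Re lam * (dotmx (Re_mx v) (Re_mx v) + dotmx (Im_mx v) (Im_mx v)).
Proof.
move=> v_eigen; set x := Re_mx v; set y := Im_mx v.
have xM : x *m M = complex.Re lam *: x - complex.Im lam *: y.
  by rewrite -Re_mx_mul_complexify v_eigen Re_mx_scale.
have yM : y *m M = complex.Re lam *: y + complex.Im lam *: x.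
  by rewrite -Im_mx_mul_complexify v_eigen Im_mx_scale.
rewrite /qform -/(dotmx (x *m M) x) -/(dotmx (y *m M) y) xM yM.
by rewrite dotmxBl dotmxDl !dotmxZl (dotmxC y x); ring.
Qed.

End Complexification.

Section MarginalStability.
Variables (R : rcfType) (n : nat) (M : 'M[R]_n.+1).
Hypothesis qM_ge0 : forall u, 0 <= qform M u.
Hypothesis qM_eq0 : forall u, qform M u = 0 -> u *m M = 0.

Lemma marginally_stable_opp : marginally_stable (- M).
Proof.
move=> lam lam_eig; have /eigenvalueP [v vE v_neq0] := lam_eig.
have v_eigen : v *m complexify M = - lam *: v.
  by rewrite scaleNr -vE /complexify map_mxN mulmxN opprK.
set x := map_mx (@complex.Re R) v; set y := map_mx (@complex.Im R) v.
have S_gt0 : 0 < dotmx x x + dotmx y y.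
  rewrite lt_def addr_ge0 ?dotmx_ge0 // andbT; apply: contraNneq v_neq0 => S0.
  have [x0 y0] : dotmx x x = 0 /\ dotmx y y = 0.
    by have := dotmx_ge0 x; have := dotmx_ge0 y; split; lra.
  by apply/eqP; exact: Re_Im_mx_eq0 (dotmx_eq0 x0) (dotmx_eq0 y0).
have qxy := eigenvector_qform v_eigen; rewrite -/x -/y raddfN /= in qxy.
have Re_le0 : complex.Re lam <= 0.
  by rewrite -oppr_ge0 -(pmulr_lge0 _ S_gt0) -qxy addr_ge0.
split; first by rewrite -complexRe lecR.
rewrite -complexRe => /(congr1 (@complex.Re R)) /= Re0.
have [qx0 qy0] : qform M x = 0 /\ qform M y = 0.
  by move: qxy; rewrite Re0 oppr0 mul0r; have := qM_ge0 x; have := qM_ge0 y; split; lra.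
have : v *m complexify M = 0.
  by apply: Re_Im_mx_eq0; rewrite ?Re_mx_mul_complexify ?Im_mx_mul_complexify qM_eq0.
rewrite v_eigen => /eqP; rewrite scaler_eq0 oppr_eq0 (negbTE v_neq0) orbF => /eqP lam0.
rewrite lam0 in lam_eig *; apply: mup0_mxminpoly => //.
apply: complexify_mul_sq_eq0 => u; rewrite !mulmxN mulNmx opprK.
by move=> /(qform_ge0_mul_sq_eq0 qM_ge0) ->; rewrite oppr0.
Qed.

End MarginalStability.

Theorem corollary2 (R : realType) (n : nat) (A : 'M[R]_n.+1) :
  let L := signed_laplacian A in
  let Ls := 2^-1 *: (L + L^T) in
  psd Ls -> corank Ls = 1%N ->
  weight_balanced L /\ marginally_stable (- L) /\ corank (- L) = 1%N.
Proof.
move=> L Ls psdLs rkLs; set o : 'rV[R]_n.+1 := const_mx 1.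
have o_neq0 : o != 0 by apply/eqP => /matrixP/(_ 0 0)/eqP; rewrite !mxE oner_eq0.
have oLT : o *m L^T = 0 by rewrite -[o]trmx_const -trmx_mul signed_laplacian_mul_const trmx0.
have qL_ge0 y : 0 <= qform L y.
  by have := psdLs y^T; rewrite trmxK -/(qform Ls y) qformZ qformD qform_tr; lra.
have oLLT : o *m (L + L^T) = 0.
  by apply: qform_eq0_mul_sym => //; rewrite -qform_tr /qform oLT mul0mx mxE.
have oL : o *m L = 0 by move: oLLT; rewrite mulmxDr oLT addr0.
have ker_sym (x : 'rV_n.+1) : x *m (L + L^T) = 0 -> (x <= o)%MS.
  have LsT : Ls^T = Ls by rewrite /Ls linearZ linearD /= trmxK addrC.
  have mulLs (y : 'rV_n.+1) : y *m Ls^T = 2^-1 *: (y *m (L + L^T)) by rewrite LsT -scalemxAr.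
  move: rkLs; rewrite /corank (rank_kermx_eq1P o_neq0) ?mulLs ?oLLT ?scaler0 // => kerLs.
  by move=> xLLT; apply: kerLs; rewrite mulLs xLLT scaler0.
have qL_eq0 (x : 'rV_n.+1) : qform L x = 0 -> x *m L = 0.
  move=> /(qform_eq0_mul_sym qL_ge0)/ker_sym/sub_rVP [c ->].
  by rewrite -scalemxAl oL scaler0.
split; first by rewrite /weight_balanced -trmx_const -trmx_mul oL trmx0.
split; first exact: marginally_stable_opp.
have mulNLT (y : 'rV_n.+1) : y *m (- L)^T = - (y *m L^T) by rewrite linearN /= mulmxN.
rewrite /corank (rank_kermx_eq1P o_neq0) ?mulNLT ?oLT ?oppr0 // => x.
move=> /eqP; rewrite mulNLT oppr_eq0 => /eqP xLT; apply/ker_sym/qform_eq0_mul_sym => //.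
by rewrite -qform_tr /qform xLT mul0mx mxE.
Qed.
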